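(* For every $n\ge1$, \[G_n(x)=(n+(n-1)x)H_n(x)+(x+x^2)H_n'(x).\]
   Context: The polynomials are defined by $G_1=H_1=1$, $G_{n+1}(x)=(2n+nx)G_n(x)+(1+x)^2G_n'(x)$ and $H_{n+1}(x)=(2n-1+(n-1)x)H_n(x)+(1+x)^2H_n'(x)$. *)

From mathcomp Require Import all_boot all_order all_algebra.
Set Implicit Arguments. Unset Strict Implicit. Unset Printing Implicit Defensive.
Import GRing.Theory.
Local Open Scope ring_scope.

(* Gs k = G_(k+1), Hs k = H_(k+1) (0-based shift to avoid junk values). *)
Fixpoint Gs (k : nat) : {poly int} :=
  match k with
  | 0%N => 1
  | k'.+1 =>
      let n := k'.+1 in
      ((2 * n)%:R%:P + n%:R *: 'X) * Gs k' + ('X + 1) ^+ 2 * (Gs k')^`()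
  end.

Fixpoint Hs (k : nat) : {poly int} :=
  match k with
  | 0%N => 1
  | k'.+1 =>
      let n := k'.+1 in
      (((2 * n)%:R - 1)%:P + (n%:R - 1) *: 'X) * Hs k' + ('X + 1) ^+ 2 * (Hs k')^`()
  end.

(* G n, H n for n >= 1 (G 0, H 0 are junk = G_1 = H_1) *)
Definition G (n : nat) : {poly int} := Gs n.-1.
Definition H (n : nat) : {poly int} := Hs n.-1.

From mathcomp Require Import all_boot all_order all_algebra.
From mathcomp Require Import ring.
Import GRing.Theory.
Local Open Scope ring_scope.

(* The map [h |-> (n + (n-1) x) h + (x + x^2) h'] intertwines the step
   operator of the H-recursion at index n with that of the G-recursion, so
   it carries H_n to G_n by induction from G_1 = H_1 = 1. *)

Section Intertwining.

Context {R : comNzRingType}.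

Definition G_step (n : nat) (p : {poly R}) : {poly R} :=
  ((2 * n)%:R%:P + n%:R *: 'X) * p + ('X + 1) ^+ 2 * p^`().

Definition H_step (n : nat) (p : {poly R}) : {poly R} :=
  (((2 * n)%:R - 1)%:P + (n%:R - 1) *: 'X) * p + ('X + 1) ^+ 2 * p^`().

Definition H_to_G (n : nat) (h : {poly R}) : {poly R} :=
  (n%:R%:P + (n%:R - 1) *: 'X) * h + ('X + 'X ^+ 2) * h^`().

Lemma G_step_H_to_G (n : nat) (h : {poly R}) :
  G_step n (H_to_G n h) = H_to_G n.+1 (H_step n h).
Proof.
rewrite /G_step /H_step /H_to_G -!mul_polyC !derivE.
rewrite ?polyCB ?polyC1 ?polyCn.
ring.
Qed.

End Intertwining.

Lemma Gs_H_to_G (k : nat) : Gs k = H_to_G k.+1 (Hs k).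
Proof.
elim: k => [|k IH].
  by rewrite /H_to_G derivC mulr0 addr0 subrr scale0r addr0 mulr1.
by rewrite -[Gs k.+1]/(G_step k.+1 (Gs k)) IH G_step_H_to_G.
Qed.

Theorem mainTheorem8 (n : nat) : (1 <= n)%N ->
  G n = (n%:R%:P + (n%:R - 1) *: 'X) * H n + ('X + 'X ^+ 2) * (H n)^`().
Proof. by case: n => // n _; rewrite /G /H /= Gs_H_to_G. Qed.
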